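(* For every integer $n\ge 1$, the pentagonal stacked prism $Y_{5,n}$ is odd prime.
   Context: All graphs are finite and simple. A graph $G$ of order $N$ is odd prime if there is a bijection $\ell:V(G)\to\{1,3,\ldots,2N-1\}$ with $\gcd(\ell(u),\ell(v))=1$ for every edge $uv$. For $k\ge 3$, $n\ge 1$, the stacked prism $Y_{k,n}$ is the Cartesian product $C_k\,\square\,P_n$ of a $k$-cycle and a path on $n$ vertices: vertices $v_{i,j}$ ($1\le i\le n$, $1\le j\le k$), with edges $v_{i,j}v_{i,j+1}$ ($1\le j\le k-1$), $v_{i,k}v_{i,1}$ for each $i$, and $v_{i,j}v_{i+1,j}$ for $1\le i\le n-1$, $1\le j\le k$. *)

From mathcomp Require Import all_boot.
Set Implicit Arguments. Unset Strict Implicit. Unset Printing Implicit Defensive.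

Definition simple_graph (T : finType) (e : rel T) : Prop :=
  symmetric e /\ irreflexive e.

(* The label set {1,3,...,2N-1} with N = #|T| is encoded as 'I_#|T|, the index
   i standing for the odd number 2*i+1. *)
Definition odd_label (N : nat) (i : 'I_N) : nat := (2 * i).+1.

Definition odd_prime (T : finType) (e : rel T) : Prop :=
  exists l : T -> 'I_#|T|, bijective l /\
    forall u v, e u v -> coprime (odd_label (l u)) (odd_label (l v)).

(* Stacked prism Y_{k,n} = C_k [] P_n. Vertex v_{i,j} (1<=i<=n, 1<=j<=k) is
   encoded as (i-1, j-1) : 'I_n * 'I_k. *)
Definition prism_adj (k n : nat) (x y : 'I_n * 'I_k) : bool :=
  let (i1, j1) := x in let (i2, j2) := y in
  ((nat_of_ord i1 == i2) &&
     ((j2 == (j1.+1 %% k) :> nat) || (j1 == (j2.+1 %% k) :> nat)))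
  || ((nat_of_ord j1 == j2) && ((i2 == i1.+1 :> nat) || (i1 == i2.+1 :> nat))).

(** Give the vertex [v_{i,j}] the label [2 (5 i + s) + 1], where the slot
    [s = sigma ((j + 2 i) mod 5)] and [sigma = (0, 1, 3, 4, 2)]: row [i] uses the
    five odd numbers [10 i + 1, ..., 10 i + 9], and the slot pattern is shifted by
    two positions from one row to the next.  With this choice, the label indices of
    any two adjacent vertices differ by a power of two, so the labels themselves
    are odd numbers differing by a power of two, hence coprime. *)

From mathcomp Require Import all_boot.
From mathcomp Require Import zify.

Lemma coprime_odd_addl_pow2 a k : odd a -> coprime a (2 ^ k + a).
Proof.
by move=> odd_a; rewrite /coprime gcdnDr -/(coprime _ _) coprimeXr ?coprimen2.
Qed.

Definition pow2_apart (x y : nat) : Prop := exists k, (x - y) + (y - x) = 2 ^ k.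

Lemma pow2_apart_sym x y : pow2_apart x y -> pow2_apart y x.
Proof. by case=> k dk; exists k; rewrite addnC. Qed.

Lemma pow2_apartDl c x y : pow2_apart x y -> pow2_apart (c + x) (c + y).
Proof. by rewrite /pow2_apart !subnDl. Qed.

Lemma pow2_apart_coprime x y :
  pow2_apart x y -> coprime (2 * x).+1 (2 * y).+1.
Proof.
wlog le_xy : x y / x <= y => [hwlog|].
  case: (leqP x y) => [|/ltnW] le; first exact: hwlog.
  by move/pow2_apart_sym/hwlog; rewrite coprime_sym; apply.
case=> k; rewrite (eqP le_xy) add0n => dk.
have -> : (2 * y).+1 = 2 ^ k.+1 + (2 * x).+1 by rewrite expnS -dk; lia.
by apply: coprime_odd_addl_pow2; rewrite /= oddM.
Qed.

Definition pent_slot (m : nat) : nat := nth 0 [:: 0; 1; 3; 4; 2] (m %% 5).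

Lemma pent_slot_lt m : pent_slot m < 5.
Proof.
rewrite /pent_slot; have := ltn_pmod m (isT : 0 < 5).
by case: (m %% 5) => [|[|[|[|[|]]]]].
Qed.

Lemma pent_slot_inj m m' : pent_slot m = pent_slot m' -> m = m' %[mod 5].
Proof.
rewrite /pent_slot; have := ltn_pmod m (isT : 0 < 5).
have := ltn_pmod m' (isT : 0 < 5).
by case: (m %% 5) => [|[|[|[|[|]]]]]; case: (m' %% 5) => [|[|[|[|[|]]]]].
Qed.

Lemma pent_slotDml m d : pent_slot (m %% 5 + d) = pent_slot (m + d).
Proof. by rewrite /pent_slot modnDml. Qed.

Ltac pow2_witness := first [by exists 0 | by exists 1 | by exists 2 | by exists 3].

Lemma pent_slot_apartS m : pow2_apart (pent_slot m) (pent_slot m.+1).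
Proof.
rewrite -[m in pent_slot m]addn0 -addn1 -!(pent_slotDml m).
have := ltn_pmod m (isT : 0 < 5).
by case: (m %% 5) => [|[|[|[|[|]]]]] // _; pow2_witness.
Qed.

Lemma pent_slot_apart_next_row m :
  pow2_apart (pent_slot m) (5 + pent_slot (m + 2)).
Proof.
rewrite -[m in pent_slot m]addn0 -!(pent_slotDml m).
have := ltn_pmod m (isT : 0 < 5).
by case: (m %% 5) => [|[|[|[|[|]]]]] // _; pow2_witness.
Qed.

Definition prism5_index (i j : nat) : nat := 5 * i + pent_slot (j + 2 * i).

Lemma prism5_index_apart_row i j :
  pow2_apart (prism5_index i j) (prism5_index i (j.+1 %% 5)).
Proof.
rewrite /prism5_index pent_slotDml addSn.
exact/(pow2_apartDl (5 * i))/pent_slot_apartS.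
Qed.

Lemma prism5_index_apart_column i j :
  pow2_apart (prism5_index i j) (prism5_index i.+1 j).
Proof.
rewrite /prism5_index mulnS -addnA addnCA.
have -> : j + 2 * i.+1 = j + 2 * i + 2 by rewrite mulnS addnCA addnC.
exact/(pow2_apartDl (5 * i))/pent_slot_apart_next_row.
Qed.

Lemma prism5_index_lt n (x : 'I_n * 'I_5) :
  prism5_index x.1 x.2 < #|{: 'I_n * 'I_5}|.
Proof.
rewrite card_prod !card_ord /prism5_index.
have := pent_slot_lt (x.2 + 2 * x.1); have := ltn_ord x.1; lia.
Qed.

Definition prism5_label n (x : 'I_n * 'I_5) : 'I_#|{: 'I_n * 'I_5}| :=
  Ordinal (prism5_index_lt n x).

Lemma prism5_label_inj n : injective (@prism5_label n).
Proof.
move=> [i j] [i' j'] /(congr1 val); rewrite /= /prism5_index => E.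
have /val_inj Ei : i = i' :> nat.
  have := pent_slot_lt (j + 2 * i); have := pent_slot_lt (j' + 2 * i'); lia.
subst i'; congr pair; apply: val_inj.
have /pent_slot_inj/eqP : pent_slot (j + 2 * i) = pent_slot (j' + 2 * i) by lia.
by rewrite eqn_modDr !modn_small // => /eqP.
Qed.

Theorem theorem3p7 (n : nat) : 1 <= n -> odd_prime (@prism_adj 5 n).
Proof.
move=> _; exists (@prism5_label n); split.
  by apply: inj_card_bij; [apply: prism5_label_inj | rewrite card_ord].
move=> [i1 j1] [i2 j2]; rewrite /prism_adj /odd_label /=.
case/orP => /andP [/eqP Ei /orP [] /eqP Ej].
- by rewrite -Ei Ej; apply/pow2_apart_coprime/prism5_index_apart_row.
- by rewrite coprime_sym -Ei Ej; apply/pow2_apart_coprime/prism5_index_apart_row.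
- by rewrite Ej -Ei; apply/pow2_apart_coprime/prism5_index_apart_column.
- by rewrite coprime_sym Ej -Ei; apply/pow2_apart_coprime/prism5_index_apart_column.
Qed.
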